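(* Let $Q$ and $W$ satisfy the standing assumptions, let $l,m\in\mathbb N_0$ with $m\le l$, and let $\mathcal R=\{(x,\hat x)\in X\times\hat X^{I^l_m}:\hat x\in E^{I^l_m}(x)\}$. Then (i) $\mathcal R$ is a simulation relation from $Q$ to $\hat Q^{I^l_m}$ w.r.t. $U\times Y$ if and only if $Q$ is future unique w.r.t. $I^l_m$; and (ii) $\mathcal R^{-1}$ is a simulation relation from $\hat Q^{I^l_m}$ to $Q$ w.r.t. $W$ if and only if $Q$ is state-based asynchronously $l$-complete w.r.t. $I^l_m$.
   Context: Strings and signals: $\diamond$ is a symbol not in any other set considered. For a set $A$ and $l\in\mathbb N_0$, $A^l$ is the set of strings of length $l$ over $A$, indexed $\zeta=\zeta(0)\cdots\zeta(l-1)$; $\lambda$ is the empty string and $\cdot$ denotes concatenation. For a map $w$ on $\mathbb Z$ (or a string) and integers $t_1\le t_2$, $w|_{[t_1,t_2]}=w(t_1)\cdots w(t_2)$ is the string of length $t_2-t_1+1$ (absolute time forgotten); if $t_2<t_1$ it is $\lambda$. For a set $\mathcal S$ of such maps or strings, $\mathcal S|_{[t_1,t_2]}=\{s|_{[t_1,t_2]}:s\in\mathcal S\}$. State machines: a state machine is $Q=(X,U,Y,\delta,X_0)$ with $X_0\subseteq X$, $\delta\subseteq X\times U\times Y\times X$. Let $H_\delta(x)=\{y:\exists u,x'.\,(x,u,y,x')\in\delta\}$, $F_\delta(x,u)=\{x':\exists y\in H_\delta(x).\,(x,u,y,x')\in\delta\}$, $T_\delta(x)=\bigcup_{u\in U}F_\delta(x,u)$.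 The full behavior $\mathcal B_f(Q)$ is the set of $(\mu,\nu,\xi)\in(U\times Y\times X)^{\mathbb N_0}$ with $\xi(0)\in X_0$ and $(\xi(k),\mu(k),\nu(k),\xi(k+1))\in\delta$ for all $k\in\mathbb N_0$. $Q$ is live and reachable if every $x\in X_0$ is $\xi(0)$ for some $(\mu,\nu,\xi)\in\mathcal B_f(Q)$ and every $x\in X$ is $\xi(k)$ for some such trajectory and some $k$. Standing assumptions: $Q=(X,U,Y,\delta,X_0)$ is live and reachable and satisfies $(x,u,y,x')\in\delta\iff(x'\in F_\delta(x,u)\wedge y\in H_\delta(x))$ for all $x,x'\in X,u\in U,y\in Y$; the external signal space $W$ is finite and either $W=U\times Y$ or $W=Y$. The projection $\pi_W(u,y)$ is $(u,y)$ if $W=U\times Y$ and $y$ if $W=Y$ (likewise $\pi_{U\times Y}(u,y)=(u,y)$, $\pi_Y(u,y)=y$). Behaviors: for a state machine $Q'$ with input set $U$ and output set $Y$, $\mathcal B(Q')$ is the set of $w:\mathbb Z\to W\cup\{\diamond\}$ such that for some $(\mu,\nu,\xi)\in\mathcal B_f(Q')$, $w(k)=\diamond$ for $k<0$ and $w(k)=\pi_W(\mu(k),\nu(k))$ for $k\ge0$. $\mathcal B_S(Q)$ is the set of pairs $(w,\xi)$ of maps on $\mathbb Z$ with $w(k)=\xi(k)=\diamond$ for $k<0$ and $(w(k),\xi(k))=(\pi_W(\mu(k),\nu(k)),\xi'(k))$ for $k\ge0$, for some $(\mu,\nu,\xi')\in\mathcal B_f(Q)$. For a set $\mathcal B$ of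 maps on $\mathbb Z$, $\Pi_l(\mathcal B)=\bigcup_{k\in\mathbb N_0}\mathcal B|_{[k-l+1,k]}$. Corresponding strings: for integers $a,b$ and $x\in X$, $E^{[a,b]}(x)=\{\zeta:\exists(w,\xi)\in\mathcal B_S(Q),k\in\mathbb N_0:\ \xi(k)=x,\ \zeta=w|_{[k+a,k+b]}\}$. For $l,m\in\mathbb N_0$ with $m\le l$, $I^l_m=[m-l,m-1]$. Future uniqueness: $Q$ is future unique w.r.t. $I^l_m$ if for all $x\in X$ and $\zeta,\zeta'\in E^{I^l_m}(x)$, $\zeta|_{[l-m,l-1]}=\zeta'|_{[l-m,l-1]}$. State-based asynchronous $l$-completeness: $Q$ is state-based asynchronously $l$-complete w.r.t. $I^l_m$ if for all $x\in X$ and $\zeta\in\Pi_{l+1}(\mathcal B(Q))$, $\zeta|_{[0,l-1]}\in E^{I^l_m}(x)$ implies $\zeta\in E^{[m-l,m]}(x)$. Abstract state machine: $\hat Q^{I^l_m}=(\hat X^{I^l_m},U,Y,\hat\delta^{I^l_m},\hat X^{I^l_m}_0)$ with $\hat X^{I^l_m}=\bigcup_{x\in X}E^{I^l_m}(x)$, $\hat X^{I^l_m}_0=\bigcup_{x\in X_0}E^{I^l_m}(x)$, and $(\hat x,u,y,\hat x')\in\hat\delta^{I^l_m}$ iff (1) $\hat x'|_{[0,l-m-1]}=(\hat x|_{[0,l-m-1]}\cdot\pi_W(u,y))|_{[1,l-m]}$, (2) $\hat x|_{[l-m,l-1]}=(\pi_W(u,y)\cdot\hat x'|_{[l-m,l-2]})|_{[0,m-1]}$,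 and (3) there are $x,x'\in X$ with $\hat x\in E^{I^l_m}(x)$, $\hat x'\in E^{I^l_m}(x')$, $(x,u,y,x')\in\delta$. Simulation relations: for state machines $Q_i=(X_i,U,Y,\delta_i,X_{0,i})$, $i=1,2$, and $V\in\{U\times Y,Y\}$, a relation $\mathcal R\subseteq X_1\times X_2$ is a simulation relation from $Q_1$ to $Q_2$ w.r.t. $V$ if (a) for every $x_1\in X_{0,1}$ there is $x_2\in X_{0,2}$ with $(x_1,x_2)\in\mathcal R$, and (b) for all $(x_1,x_2)\in\mathcal R$ and $(x_1,u_1,y_1,x_1')\in\delta_1$ there exist $u_2,y_2,x_2'$ with $(x_2,u_2,y_2,x_2')\in\delta_2$, $(x_1',x_2')\in\mathcal R$ and $\pi_V(u_1,y_1)=\pi_V(u_2,y_2)$. $\mathcal R^{-1}=\{(x_2,x_1):(x_1,x_2)\in\mathcal R\}$. *)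

From Stdlib Require Import ZArith List.
Import ListNotations.
Set Implicit Arguments.
Open Scope Z_scope.

(* Strings are lists; the symbol "diamond" is None, signal values are Some w. *)

(* w|_[t1,t2] for a map on Z (lambda if t2 < t1) *)
Definition restrZ {A : Type} (w : Z -> A) (t1 t2 : Z) : list A :=
  map (fun i => w (t1 + Z.of_nat i)) (seq 0 (Z.to_nat (t2 - t1 + 1))).

(* zeta|_[a,b] for a string zeta = zeta(0)...zeta(n-1) (lambda if b < a);
   only used with 0 <= a and b < length zeta when b >= a *)
Definition restrL {A : Type} (s : list A) (a b : Z) : list A :=
  if b <? a then [] else firstn (Z.to_nat (b - a + 1)) (skipn (Z.to_nat a) s).

(* External signal space: b = true means W = U x Y, b = false means W = Y. *)
Definition Wt (U Y : Type) (b : bool) : Type := if b then (U * Y)%type else Y.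

Definition piW (U Y : Type) (b : bool) : U -> Y -> Wt U Y b :=
  match b return U -> Y -> Wt U Y b with
  | true => fun u y => (u, y)
  | false => fun u y => y
  end.

Definition W_finite (U Y : Type) (b : bool) : Prop :=
  exists l : list (Wt U Y b), forall w, In w l.

(* A state machine (X, U, Y, delta, X0); sset is the state set X as a subset
   of the carrier type st. *)
Record SM (U Y : Type) := mkSM {
  st : Type;
  sset : st -> Prop;
  trans : st -> U -> Y -> st -> Prop;
  init : st -> Prop }.
Arguments st {U Y}.
Arguments sset {U Y}.
Arguments trans {U Y}.
Arguments init {U Y}.

Section Defs.
Variables (X U Y : Type) (delta : X -> U -> Y -> X -> Prop) (X0 : X -> Prop).

Definition Hdelta (x : X) (y : Y) : Prop := exists u x', delta x u y x'.
Definition Fdelta (x : X) (u : U) (x' : X) : Prop :=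
  exists y, Hdelta x y /\ delta x u y x'.
Definition Tdelta (x x' : X) : Prop := exists u, Fdelta x u x'.

Definition full_beh (mu : nat -> U) (nu : nat -> Y) (xi : nat -> X) : Prop :=
  X0 (xi 0%nat) /\ forall k, delta (xi k) (mu k) (nu k) (xi (S k)).

Definition live_reachable : Prop :=
  (forall x, X0 x -> exists mu nu xi, full_beh mu nu xi /\ xi 0%nat = x) /\
  (forall x, exists mu nu xi k, full_beh mu nu xi /\ xi k = x).

Variable b : bool.

Definition Beh (w : Z -> option (Wt U Y b)) : Prop :=
  exists mu nu xi, full_beh mu nu xi /\
    forall k : Z, (k < 0 -> w k = None) /\
                  (0 <= k -> w k = Some (piW b (mu (Z.to_nat k)) (nu (Z.to_nat k)))).

Definition BS (w : Z -> option (Wt U Y b)) (xs : Z -> option X) : Prop :=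
  exists mu nu xi, full_beh mu nu xi /\
    forall k : Z, (k < 0 -> w k = None /\ xs k = None) /\
                  (0 <= k -> w k = Some (piW b (mu (Z.to_nat k)) (nu (Z.to_nat k)))
                             /\ xs k = Some (xi (Z.to_nat k))).

Definition Pi (l : nat) (B : (Z -> option (Wt U Y b)) -> Prop)
  (zeta : list (option (Wt U Y b))) : Prop :=
  exists w (k : nat), B w /\ zeta = restrZ w (Z.of_nat k - Z.of_nat l + 1) (Z.of_nat k).

Definition E (a b' : Z) (x : X) (zeta : list (option (Wt U Y b))) : Prop :=
  exists w xs (k : nat), BS w xs /\ xs (Z.of_nat k) = Some x /\
    zeta = restrZ w (Z.of_nat k + a) (Z.of_nat k + b').

Definition Ilo (l m : nat) : Z := Z.of_nat m - Z.of_nat l.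
Definition Ihi (m : nat) : Z := Z.of_nat m - 1.

Definition future_unique (l m : nat) : Prop :=
  forall x zeta zeta', E (Ilo l m) (Ihi m) x zeta -> E (Ilo l m) (Ihi m) x zeta' ->
    restrL zeta (Z.of_nat l - Z.of_nat m) (Z.of_nat l - 1)
    = restrL zeta' (Z.of_nat l - Z.of_nat m) (Z.of_nat l - 1).

Definition async_complete (l m : nat) : Prop :=
  forall x zeta, Pi (S l) Beh zeta ->
    E (Ilo l m) (Ihi m) x (restrL zeta 0 (Z.of_nat l - 1)) ->
    E (Ilo l m) (Z.of_nat m) x zeta.

Definition Xhat (l m : nat) (s : list (option (Wt U Y b))) : Prop :=
  exists x, E (Ilo l m) (Ihi m) x s.
Definition X0hat (l m : nat) (s : list (option (Wt U Y b))) : Prop :=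
  exists x, X0 x /\ E (Ilo l m) (Ihi m) x s.
Definition deltahat (l m : nat) (s : list (option (Wt U Y b))) (u : U) (y : Y)
  (s' : list (option (Wt U Y b))) : Prop :=
  let L := Z.of_nat l in let M := Z.of_nat m in
  restrL s' 0 (L - M - 1) = restrL (restrL s 0 (L - M - 1) ++ [Some (piW b u y)]) 1 (L - M) /\
  restrL s (L - M) (L - 1) = restrL (Some (piW b u y) :: restrL s' (L - M) (L - 2)) 0 (M - 1) /\
  exists x x', E (Ilo l m) (Ihi m) x s /\ E (Ilo l m) (Ihi m) x' s' /\ delta x u y x'.

Definition Qhat (l m : nat) : SM U Y :=
  @mkSM U Y (list (option (Wt U Y b))) (Xhat l m) (deltahat l m) (X0hat l m).

Definition Rel (l m : nat) (x : X) (s : list (option (Wt U Y b))) : Prop :=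
  E (Ilo l m) (Ihi m) x s.

End Defs.

Definition Qm (X U Y : Type) (delta : X -> U -> Y -> X -> Prop) (X0 : X -> Prop) : SM U Y :=
  @mkSM U Y X (fun _ => True) delta X0.

(* Simulation relation from M1 to M2 w.r.t. V (V = U x Y if v = true, V = Y otherwise) *)
Definition sim_rel (U Y : Type) (v : bool) (M1 M2 : SM U Y)
  (R : st M1 -> st M2 -> Prop) : Prop :=
  (forall x1 x2, R x1 x2 -> sset M1 x1 /\ sset M2 x2) /\
  (forall x1, init M1 x1 -> exists x2, init M2 x2 /\ R x1 x2) /\
  (forall x1 x2 u1 y1 x1', R x1 x2 -> trans M1 x1 u1 y1 x1' ->
     exists u2 y2 x2', trans M2 x2 u2 y2 x2' /\ R x1' x2' /\
                       piW v u1 y1 = piW v u2 y2).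

(* An abstract state in [E^{I^l_m}(x)] is a length-[l] window of the external signal of a run
   that is in state [x] at position [l - m] of the window. Conditions (1) and (2) of an abstract
   transition [s -(u,y)-> s'] say precisely that [s] and [s'] are the two length-[l] subwindows of
   one length-[l+1] window carrying [(u,y)] at position [l - m]; so splicing a run through [s]
   with a run through [s'] at the transition gives a single run whose consecutive windows are
   [s] and [s'].
   (i) A concrete transition out of [x] can be matched from every [s] in [E(x)] exactly when
   the last [m] symbols of [s], those from [x] on, are determined by [x]: matching a transition of one run from the
   window of another run through [x] reveals one more future symbol.
   (ii) An abstract transition out of [s] in [E(x)] can be matched from [x] exactly when the
   length-[l+1] window glued from [s] and [s'] is realised by a run through [x]. *)

From Stdlib Require Import ZArith List Lia.
Import ListNotations.
Open Scope Z_scope.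
Set Implicit Arguments.

Section Windows.
Variable A : Type.

Definition window (w : Z -> A) (p a c : Z) : list A := restrZ w (p + a) (p + c).

Lemma length_restrZ (w : Z -> A) a c : length (restrZ w a c) = Z.to_nat (c - a + 1).
Proof. unfold restrZ. now rewrite length_map, length_seq. Qed.

Lemma nth_restrZ (w : Z -> A) a c i d :
  (i < Z.to_nat (c - a + 1))%nat -> nth i (restrZ w a c) d = w (a + Z.of_nat i).
Proof.
  intros Hi. unfold restrZ.
  rewrite (nth_indep _ d (w (a + Z.of_nat 0))) by (rewrite length_map, length_seq; lia).
  rewrite (map_nth (fun i => w (a + Z.of_nat i))), seq_nth by lia. reflexivity.
Qed.

Lemma window_eq_iff (w w' : Z -> A) p p' a c :
  window w p a c = window w' p' a c <-> forall t, a <= t <= c -> w (p + t) = w' (p' + t).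
Proof.
  unfold window. split.
  - intros H t Ht.
    assert (Hn := f_equal (fun s => nth (Z.to_nat (t - a)) s (w p)) H). cbv beta in Hn.
    rewrite !nth_restrZ in Hn by lia. rewrite Z2Nat.id in Hn by lia.
    replace (p + t) with (p + a + (t - a)) by lia.
    replace (p' + t) with (p' + a + (t - a)) by lia. exact Hn.
  - intros H. apply nth_ext with (d := w p) (d' := w p).
    + rewrite !length_restrZ. f_equal. lia.
    + intros i Hi. rewrite length_restrZ in Hi. rewrite !nth_restrZ by lia.
      replace (p + a + Z.of_nat i) with (p + (a + Z.of_nat i)) by lia.
      replace (p' + a + Z.of_nat i) with (p' + (a + Z.of_nat i)) by lia.
      apply H. lia.
Qed.

Lemma window_reframe (w : Z -> A) p a c p' a' c' :
  p + a = p' + a' -> p + c = p' + c' -> window w p a c = window w p' a' c'.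
Proof. unfold window. now intros -> ->. Qed.

Lemma window_empty (w : Z -> A) p a c : c < a -> window w p a c = [].
Proof.
  intros H. unfold window, restrZ. now replace (Z.to_nat (p + c - (p + a) + 1)) with 0%nat by lia.
Qed.

Lemma window_cons (w : Z -> A) p a c :
  a <= c -> w (p + a) :: window w p (a + 1) c = window w p a c.
Proof.
  intros H. apply nth_ext with (d := w p) (d' := w p); unfold window.
  - cbn [length]. rewrite !length_restrZ. lia.
  - intros [|i] Hi; cbn [length nth] in *; rewrite length_restrZ in Hi.
    + rewrite nth_restrZ by lia. f_equal. lia.
    + rewrite !nth_restrZ by lia. f_equal. lia.
Qed.

Lemma window_snoc (w : Z -> A) p a c :
  a <= c + 1 -> window w p a c ++ [w (p + c + 1)] = window w p a (c + 1).
Proof.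
  intros H. apply nth_ext with (d := w p) (d' := w p); unfold window.
  - rewrite length_app, !length_restrZ. cbn [length]. lia.
  - intros i Hi. rewrite length_app, length_restrZ in Hi. cbn [length] in Hi.
    rewrite (nth_restrZ w (p + a)) by lia.
    destruct (Nat.ltb_spec i (Z.to_nat (p + c - (p + a) + 1))).
    + rewrite app_nth1 by (rewrite length_restrZ; lia). now rewrite nth_restrZ.
    + rewrite app_nth2 by (rewrite length_restrZ; lia). rewrite length_restrZ.
      replace (i - Z.to_nat (p + c - (p + a) + 1))%nat with 0%nat by lia.
      cbn. f_equal. lia.
Qed.

Lemma restrL_window (w : Z -> A) p a c i j :
  0 <= i -> j <= c - a -> restrL (window w p a c) i j = window w p (a + i) (a + j).
Proof.
  intros Hi Hj. unfold restrL. destruct (Z.ltb_spec j i).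
  - symmetry. apply window_empty. lia.
  - apply nth_ext with (d := w p) (d' := w p); unfold window.
    + rewrite length_firstn, length_skipn, !length_restrZ. lia.
    + intros n Hn. rewrite length_firstn, length_skipn, !length_restrZ in Hn.
      rewrite nth_firstn. destruct (Nat.ltb_spec n (Z.to_nat (j - i + 1))); [|lia].
      rewrite nth_skipn, !nth_restrZ by lia. f_equal. lia.
Qed.

Definition splice (w1 : Z -> A) (p1 : Z) (x : A) (w2 : Z -> A) (p2 t : Z) : A :=
  if t <? p1 then w1 t else if t =? p1 then x else w2 (p2 + (t - p1 - 1)).

Lemma splice_lt w1 p1 x w2 p2 t : t < p1 -> splice w1 p1 x w2 p2 t = w1 t.
Proof. intros H. unfold splice. destruct (Z.ltb_spec t p1); [reflexivity | lia]. Qed.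

Lemma splice_at w1 p1 x w2 p2 : splice w1 p1 x w2 p2 p1 = x.
Proof. unfold splice. now rewrite Z.ltb_irrefl, Z.eqb_refl. Qed.

Lemma splice_after w1 p1 x w2 p2 t :
  0 <= t -> splice w1 p1 x w2 p2 (p1 + 1 + t) = w2 (p2 + t).
Proof.
  intros H. unfold splice.
  destruct (Z.ltb_spec (p1 + 1 + t) p1); [lia|].
  destruct (Z.eqb_spec (p1 + 1 + t) p1); [lia|]. f_equal. lia.
Qed.

Section Shift.
Variables l m : nat.
Hypothesis Hml : (m <= l)%nat.
Local Notation L := (Z.of_nat l).
Local Notation M := (Z.of_nat m).

Definition window_I (w : Z -> A) (p : Z) : list A := window w p (M - L) (M - 1).

Lemma window_I_eq_iff w w' p p' :
  window_I w p = window_I w' p' <-> forall t, M - L <= t <= M - 1 -> w (p + t) = w' (p' + t).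
Proof. apply window_eq_iff. Qed.

Definition window_step (s : list A) (x : A) (s' : list A) : Prop :=
  restrL s' 0 (L - M - 1) = restrL (restrL s 0 (L - M - 1) ++ [x]) 1 (L - M) /\
  restrL s (L - M) (L - 1) = restrL (x :: restrL s' (L - M) (L - 2)) 0 (M - 1).

Lemma window_step_past_iff w1 w2 p1 p2 x (J := splice w1 p1 x w2 p2) :
  restrL (window_I w2 p2) 0 (L - M - 1)
  = restrL (restrL (window_I w1 p1) 0 (L - M - 1) ++ [x]) 1 (L - M)
  <-> window_I J (p1 + 1) = window_I w2 p2.
Proof.
  unfold window_I. rewrite !restrL_window by lia.
  assert (Hpast : window w1 p1 (M - L + 0) (M - L + (L - M - 1)) = window J p1 (M - L) (-1)).
  { rewrite (window_reframe w1 p1 _ _ p1 (M - L) (-1)) by lia.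
    apply window_eq_iff. intros t Ht. unfold J. now rewrite splice_lt by lia. }
  assert (Hx : x = J (p1 + -1 + 1)).
  { unfold J. replace (p1 + -1 + 1) with p1 by lia. now rewrite splice_at. }
  rewrite Hpast, Hx, window_snoc, restrL_window by lia.
  rewrite (window_reframe w2 p2 _ _ p2 (M - L) (-1)) by lia.
  rewrite (window_reframe J p1 _ _ (p1 + 1) (M - L) (-1)) by lia.
  rewrite !window_eq_iff. split; intros H t Ht.
  - destruct (Z.ltb_spec t 0).
    + symmetry. apply H. lia.
    + unfold J. now rewrite splice_after by lia.
  - symmetry. apply H. lia.
Qed.

Lemma window_step_future_iff w1 w2 p1 p2 x (J := splice w1 p1 x w2 p2) :
  restrL (window_I w1 p1) (L - M) (L - 1)
  = restrL (x :: restrL (window_I w2 p2) (L - M) (L - 2)) 0 (M - 1)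
  <-> window_I J p1 = window_I w1 p1.
Proof.
  unfold window_I. rewrite !restrL_window by lia.
  rewrite (window_reframe w1 p1 _ _ p1 0 (M - 1)) by lia.
  assert (Hnext : window w2 p2 (M - L + (L - M)) (M - L + (L - 2)) = window J p1 (0 + 1) (M - 1)).
  { rewrite (window_reframe w2 p2 _ _ p2 0 (M - 2)) by lia.
    rewrite (window_reframe J p1 _ _ (p1 + 1) 0 (M - 2)) by lia.
    apply window_eq_iff. intros t Ht. unfold J. now rewrite splice_after by lia. }
  rewrite Hnext. unfold window_I. rewrite window_eq_iff.
  destruct (Nat.eq_dec m 0) as [Hm0 | Hm0].
  - rewrite window_empty by lia. unfold restrL. rewrite Hm0. cbn.
    split; [intros _ t Ht; unfold J; apply splice_lt; lia | reflexivity].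
  - replace x with (J (p1 + 0)) by (unfold J; rewrite Z.add_0_r; apply splice_at).
    rewrite window_cons, restrL_window by lia.
    rewrite (window_reframe J p1 _ _ p1 0 (M - 1)) by lia.
    rewrite window_eq_iff. split; intros H t Ht.
    + destruct (Z.ltb_spec t 0).
      * unfold J. now rewrite splice_lt by lia.
      * symmetry. apply H. lia.
    + symmetry. apply H. lia.
Qed.

Lemma window_step_splice w1 w2 p1 p2 x (J := splice w1 p1 x w2 p2) :
  window_step (window_I w1 p1) x (window_I w2 p2) <->
  window_I J p1 = window_I w1 p1 /\ window_I J (p1 + 1) = window_I w2 p2.
Proof. unfold window_step. rewrite window_step_past_iff, window_step_future_iff. tauto. Qed.

Lemma restrL_window_I_future w p : restrL (window_I w p) (L - M) (L - 1) = window w p 0 (M - 1).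
Proof. unfold window_I. rewrite restrL_window by lia. apply window_reframe; lia. Qed.

Lemma restrL_window_init w p : restrL (window w p (M - L) M) 0 (L - 1) = window_I w p.
Proof. unfold window_I. rewrite restrL_window by lia. apply window_reframe; lia. Qed.

Lemma restrL_window_succ w p : restrL (window w p (M - L) M) 1 L = window_I w (p + 1).
Proof. unfold window_I. rewrite restrL_window by lia. apply window_reframe; lia. Qed.

Lemma window_step_consecutive w p : window_step (window_I w p) (w p) (window_I w (p + 1)).
Proof.
  assert (Hself : forall t, splice w p (w p) w (p + 1) t = w t).
  { intros t. unfold splice.
    destruct (Z.ltb_spec t p); [|destruct (Z.eqb_spec t p) as [->|]]; f_equal; lia. }
  apply window_step_splice. split; apply window_eq_iff; intros t _; apply Hself.
Qed.

Lemma window_eq_of_subwindows w w' p p' :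
  window_I w p = window_I w' p' -> window_I w (p + 1) = window_I w' (p' + 1) -> w p = w' p' ->
  window w p (M - L) M = window w' p' (M - L) M.
Proof.
  unfold window_I. rewrite !window_eq_iff. intros Hfst Hsnd Hnow t Ht.
  destruct (Z.eq_dec t 0) as [-> | Ht0]; [now rewrite !Z.add_0_r|].
  destruct (Z.leb_spec t (M - 1)); [apply Hfst; lia|].
  replace (p + t) with (p + 1 + (t - 1)) by lia.
  replace (p' + t) with (p' + 1 + (t - 1)) by lia. apply Hsnd. lia.
Qed.

End Shift.
End Windows.

Section Runs.
Variables (X U Y : Type) (delta : X -> U -> Y -> X -> Prop) (X0 : X -> Prop) (b : bool).

Record run := Run { run_in : nat -> U; run_out : nat -> Y; run_st : nat -> X }.

Definition is_run (r : run) : Prop := full_beh delta X0 (run_in r) (run_out r) (run_st r).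

Definition signal (r : run) (t : Z) : option (Wt U Y b) :=
  if t <? 0 then None else Some (piW b (run_in r (Z.to_nat t)) (run_out r (Z.to_nat t))).

Lemma signal_neg r t : t < 0 -> signal r t = None.
Proof. intros H. unfold signal. destruct (Z.ltb_spec t 0); [reflexivity | lia]. Qed.

Lemma signal_of_nat r (k : nat) :
  signal r (Z.of_nat k) = Some (piW b (run_in r k) (run_out r k)).
Proof. unfold signal. destruct (Z.ltb_spec (Z.of_nat k) 0); [lia|]. now rewrite Nat2Z.id. Qed.

Lemma live_reachable_runs :
  live_reachable delta X0 ->
  (forall x, X0 x -> exists r, is_run r /\ run_st r 0 = x) /\
  (forall x, exists r k, is_run r /\ run_st r k = x).
Proof.
  intros [Hlive Hreach]. split.
  - intros x Hx. destruct (Hlive x Hx) as (mu & nu & xi & Hr & Hx0). now exists (Run mu nu xi).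
  - intros x. destruct (Hreach x) as (mu & nu & xi & k & Hr & Hxk). now exists (Run mu nu xi), k.
Qed.

Lemma run_step r k : is_run r -> delta (run_st r k) (run_in r k) (run_out r k) (run_st r (S k)).
Proof. intros [_ H]. apply H. Qed.

Lemma E_iff_run a c x zeta :
  E delta X0 b a c x zeta <->
  exists r (k : nat), is_run r /\ run_st r k = x /\ zeta = window (signal r) (Z.of_nat k) a c.
Proof.
  split.
  - intros (w & xs & k & (mu & nu & xi & Hrun & Hw) & Hx & ->).
    exists (Run mu nu xi), k. split; [exact Hrun|]. split.
    + destruct (Hw (Z.of_nat k)) as [_ H]. destruct H as [_ H]; [lia|].
      rewrite Hx, Nat2Z.id in H. cbn. congruence.
    + apply window_eq_iff. intros t _. unfold signal. cbn.
      destruct (Hw (Z.of_nat k + t)) as [Hneg Hpos].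
      destruct (Z.ltb_spec (Z.of_nat k + t) 0); [apply Hneg | apply Hpos]; lia.
  - intros ([mu nu xi] & k & Hrun & Hx & ->).
    exists (signal (Run mu nu xi)), (fun t => if t <? 0 then None else Some (xi (Z.to_nat t))), k.
    split; [|split; [|reflexivity]].
    + exists mu, nu, xi. split; [exact Hrun|]. intros t. unfold signal.
      destruct (Z.ltb_spec t 0); split; intros; now try lia.
    + destruct (Z.ltb_spec (Z.of_nat k) 0); [lia|]. now rewrite Nat2Z.id, <- Hx.
Qed.

Lemma Beh_iff_run w : Beh delta X0 b w <-> exists r, is_run r /\ forall t, w t = signal r t.
Proof.
  split.
  - intros (mu & nu & xi & Hrun & Hw). exists (Run mu nu xi). split; [exact Hrun|].
    intros t. unfold signal. cbn. destruct (Hw t) as [Hneg Hpos].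
    destruct (Z.ltb_spec t 0); [apply Hneg | apply Hpos]; lia.
  - intros ([mu nu xi] & Hrun & Hw). exists mu, nu, xi. split; [exact Hrun|].
    intros t. rewrite Hw. unfold signal.
    destruct (Z.ltb_spec t 0); split; intros; now try lia.
Qed.

Definition glue {T : Type} (f1 : nat -> T) (k1 : nat) (c : T) (f2 : nat -> T) (k2 j : nat) : T :=
  if (j <? k1)%nat then f1 j else if (j =? k1)%nat then c else f2 (k2 + (j - S k1))%nat.

Definition splice_run (r1 : run) (k1 : nat) (u : U) (y : Y) (r2 : run) (k2 : nat) : run :=
  Run (glue (run_in r1) k1 u (run_in r2) k2) (glue (run_out r1) k1 y (run_out r2) k2)
    (fun j => if (j <=? k1)%nat then run_st r1 j else run_st r2 (k2 + (j - S k1))%nat).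

Section Splice.
Variables (r1 : run) (k1 : nat) (u : U) (y : Y) (r2 : run) (k2 : nat).

Lemma splice_run_st_at : run_st (splice_run r1 k1 u y r2 k2) k1 = run_st r1 k1.
Proof. cbn [splice_run run_st]. now rewrite Nat.leb_refl. Qed.

Lemma splice_run_st_next : run_st (splice_run r1 k1 u y r2 k2) (S k1) = run_st r2 k2.
Proof.
  cbn [splice_run run_st]. destruct (Nat.leb_spec (S k1) k1); [lia|].
  now replace (k2 + (S k1 - S k1))%nat with k2 by lia.
Qed.

Lemma splice_run_in_at : run_in (splice_run r1 k1 u y r2 k2) k1 = u.
Proof. cbn [splice_run run_in]. unfold glue. now rewrite Nat.ltb_irrefl, Nat.eqb_refl. Qed.

Lemma splice_run_out_at : run_out (splice_run r1 k1 u y r2 k2) k1 = y.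
Proof. cbn [splice_run run_out]. unfold glue. now rewrite Nat.ltb_irrefl, Nat.eqb_refl. Qed.

Lemma is_run_splice_run :
  is_run r1 -> is_run r2 -> delta (run_st r1 k1) u y (run_st r2 k2) ->
  is_run (splice_run r1 k1 u y r2 k2).
Proof.
  intros [H10 H1] [H20 H2] Hd. split; [exact H10|]. intros j.
  cbn [splice_run run_in run_out run_st]. unfold glue.
  destruct (Nat.ltb_spec j k1); [|destruct (Nat.eqb_spec j k1) as [->|]].
  - destruct (Nat.leb_spec j k1), (Nat.leb_spec (S j) k1); try lia. apply H1.
  - rewrite Nat.leb_refl. destruct (Nat.leb_spec (S k1) k1); [lia|].
    now replace (k2 + (S k1 - S k1))%nat with k2 by lia.
  - destruct (Nat.leb_spec j k1), (Nat.leb_spec (S j) k1); try lia.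
    replace (k2 + (S j - S k1))%nat with (S (k2 + (j - S k1))) by lia. apply H2.
Qed.

Lemma signal_splice_run t :
  signal (splice_run r1 k1 u y r2 k2) t =
  splice (signal r1) (Z.of_nat k1) (Some (piW b u y)) (signal r2) (Z.of_nat k2) t.
Proof.
  unfold splice, signal. cbn [splice_run run_in run_out]. unfold glue.
  destruct (Z.ltb_spec t 0), (Z.ltb_spec t (Z.of_nat k1)); try lia; try reflexivity.
  - destruct (Nat.ltb_spec (Z.to_nat t) k1); [reflexivity | lia].
  - destruct (Nat.ltb_spec (Z.to_nat t) k1); [lia|].
    destruct (Z.eqb_spec t (Z.of_nat k1)), (Nat.eqb_spec (Z.to_nat t) k1); try lia; [reflexivity|].
    destruct (Z.ltb_spec (Z.of_nat k2 + (t - Z.of_nat k1 - 1)) 0); [lia|].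
    now replace (k2 + (Z.to_nat t - S k1))%nat
      with (Z.to_nat (Z.of_nat k2 + (t - Z.of_nat k1 - 1))) by lia.
Qed.
End Splice.

End Runs.
Arguments is_run_splice_run {X U Y delta X0 r1 k1 u y r2 k2}.

Section Abstraction.
Variables (X U Y : Type) (delta : X -> U -> Y -> X -> Prop) (X0 : X -> Prop).
Variables (b : bool) (l m : nat).
Hypothesis Hml : (m <= l)%nat.

Local Notation L := (Z.of_nat l).
Local Notation M := (Z.of_nat m).
Local Notation is_run := (is_run delta X0).
Local Notation signal := (signal b).
Local Notation Rel := (Rel delta X0 b l m).
Local Notation window_I := (window_I l m).

Lemma Rel_iff_run x s :
  Rel x s <->
  exists r (k : nat), is_run r /\ run_st r k = x /\ s = window_I (signal r) (Z.of_nat k).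
Proof. apply E_iff_run. Qed.

Lemma Rel_window_run r (k : nat) : is_run r -> Rel (run_st r k) (window_I (signal r) (Z.of_nat k)).
Proof. intros Hr. apply Rel_iff_run. now exists r, k. Qed.

Lemma window_I_succ (w : Z -> option (Wt U Y b)) (k : nat) :
  window_I w (Z.of_nat (S k)) = window_I w (Z.of_nat k + 1).
Proof. now rewrite Nat2Z.inj_succ. Qed.

Lemma window_I_splice_run (r1 r2 : run X U Y) (k1 k2 : nat) (u : U) (y : Y) p :
  window_I (signal (splice_run r1 k1 u y r2 k2)) p =
  window_I (splice (signal r1) (Z.of_nat k1) (Some (piW b u y)) (signal r2) (Z.of_nat k2)) p.
Proof. apply window_I_eq_iff. intros t _. apply signal_splice_run. Qed.

Lemma deltahat_iff s u y s' :
  deltahat delta X0 b l m s u y s' <->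
  window_step l m s (Some (piW b u y)) s' /\
  exists x x', Rel x s /\ Rel x' s' /\ delta x u y x'.
Proof. unfold deltahat, window_step. cbv zeta. tauto. Qed.

Lemma deltahat_consecutive r (k : nat) u y :
  is_run r -> run_in r k = u -> run_out r k = y ->
  deltahat delta X0 b l m (window_I (signal r) (Z.of_nat k)) u y
    (window_I (signal r) (Z.of_nat (S k))).
Proof.
  intros Hr <- <-. apply deltahat_iff. split.
  - rewrite window_I_succ, <- signal_of_nat. apply (window_step_consecutive Hml).
  - exists (run_st r k), (run_st r (S k)).
    split; [|split]; [apply Rel_window_run; exact Hr.. | exact (run_step k Hr)].
Qed.

Lemma window_of_Pi zeta :
  Pi U Y b (S l) (Beh delta X0 b) zeta ->
  exists r p, is_run r /\ - M <= p /\ zeta = window (signal r) p (M - L) M.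
Proof.
  intros (w & K & Hw & ->). apply Beh_iff_run in Hw as (r & Hr & Hw).
  exists r, (Z.of_nat K - M). split; [exact Hr|]. split; [lia|].
  transitivity (window w (Z.of_nat K - M) (M - L) M); [unfold window; f_equal; lia|].
  apply window_eq_iff. intros t _. apply Hw.
Qed.

Lemma Pi_window_run r (k : nat) :
  is_run r -> Pi U Y b (S l) (Beh delta X0 b) (window (signal r) (Z.of_nat k) (M - L) M).
Proof.
  intros Hr. exists (signal r), (k + m)%nat. split; [apply Beh_iff_run; now exists r|].
  unfold window. f_equal; lia.
Qed.

(* For [m > 0] the window contains the symbol at time [p], which is [None] before time 0. *)
Lemma Rel_window_nonneg x (r : run X U Y) p :
  Rel x (window_I (signal r) p) -> - M <= p -> 0 <= p.
Proof.
  intros HR Hp. destruct (Nat.eq_dec m 0) as [Hm0 | Hm0]; [lia|].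
  apply Rel_iff_run in HR as (r1 & k1 & _ & _ & Hs).
  apply window_I_eq_iff with (t := 0) in Hs; [|lia].
  rewrite !Z.add_0_r, signal_of_nat in Hs.
  destruct (Z.ltb_spec p 0) as [Hneg|]; [|assumption].
  rewrite signal_neg in Hs by exact Hneg. discriminate.
Qed.

Lemma future_unique_splice_run {r1 r2 : run X U Y} {k1 k2 : nat} {u : U} {y : Y} :
  future_unique delta X0 b l m -> is_run r1 -> is_run r2 ->
  delta (run_st r1 k1) u y (run_st r2 k2) ->
  window_I (signal (splice_run r1 k1 u y r2 k2)) (Z.of_nat k1)
  = window_I (signal r1) (Z.of_nat k1).
Proof.
  intros HFU Hr1 Hr2 Hd.
  assert (HR := Rel_window_run k1 (is_run_splice_run Hr1 Hr2 Hd)).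
  rewrite splice_run_st_at in HR.
  assert (Hfut := HFU _ _ _ (Rel_window_run k1 Hr1) HR).
  rewrite !(restrL_window_I_future Hml), window_eq_iff in Hfut.
  apply window_I_eq_iff. intros t Ht. rewrite signal_splice_run.
  destruct (Z.ltb_spec t 0).
  - apply splice_lt. lia.
  - rewrite <- signal_splice_run. symmetry. apply Hfut. lia.
Qed.

Lemma sim_of_future_unique :
  live_reachable delta X0 -> future_unique delta X0 b l m ->
  sim_rel true (Qm delta X0) (Qhat delta X0 b l m) Rel.
Proof.
  intros Hlr HFU. apply live_reachable_runs in Hlr as [Hlive Hreach]. split; [|split].
  - intros x s Hs. split; [exact I | now exists x].
  - intros x Hx. destruct (Hlive x Hx) as (r & Hr & <-).
    assert (HR := Rel_window_run 0 Hr).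
    exists (window_I (signal r) (Z.of_nat 0)). split; [now exists (run_st r 0) | exact HR].
  - intros x s u y x' Hs Hd. cbn in *.
    apply Rel_iff_run in Hs as (r1 & k1 & Hr1 & <- & ->).
    destruct (Hreach x') as (r2 & k2 & Hr2 & <-).
    set (r := splice_run r1 k1 u y r2 k2).
    assert (Hr : is_run r) by now apply is_run_splice_run.
    exists u, y, (window_I (signal r) (Z.of_nat (S k1))). split; [|split; [|reflexivity]].
    + rewrite <- (future_unique_splice_run HFU Hr1 Hr2 Hd).
      apply deltahat_consecutive; [exact Hr | apply splice_run_in_at | apply splice_run_out_at].
    + rewrite <- (splice_run_st_next r1 k1 u y). exact (Rel_window_run (S k1) Hr).
Qed.

Lemma signals_agree_of_sim :
  sim_rel true (Qm delta X0) (Qhat delta X0 b l m) Rel ->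
  forall j : nat, (j < m)%nat -> forall r1 k1 r2 k2,
  is_run r1 -> is_run r2 -> run_st r1 k1 = run_st r2 k2 ->
  signal r1 (Z.of_nat k1 + Z.of_nat j) = signal r2 (Z.of_nat k2 + Z.of_nat j).
Proof.
  intros (_ & _ & Hsim) j. induction j as [|j IH]; intros Hj r1 k1 r2 k2 Hr1 Hr2 Hx;
    assert (HR := Rel_window_run k1 Hr1); rewrite Hx in HR;
    destruct (Hsim _ _ _ _ _ HR (run_step k2 Hr2)) as (u & y & s' & Hd & HR' & Hio);
    cbn in Hio; injection Hio as <- <-;
    apply deltahat_iff in Hd as [Hstep _];
    apply Rel_iff_run in HR' as (r3 & k3 & Hr3 & Hx3 & ->);
    apply (window_step_splice Hml) in Hstep as [Hfut _];
    rewrite window_I_eq_iff in Hfut.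
  - change (Z.of_nat 0) with 0. rewrite <- (Hfut 0) by lia.
    now rewrite !Z.add_0_r, splice_at, signal_of_nat.
  - rewrite <- Hfut by lia.
    replace (Z.of_nat k1 + Z.of_nat (S j)) with (Z.of_nat k1 + 1 + Z.of_nat j) by lia.
    rewrite splice_after by lia.
    replace (Z.of_nat k2 + Z.of_nat (S j)) with (Z.of_nat (S k2) + Z.of_nat j) by lia.
    apply IH; auto. lia.
Qed.

Lemma future_unique_of_sim :
  sim_rel true (Qm delta X0) (Qhat delta X0 b l m) Rel -> future_unique delta X0 b l m.
Proof.
  intros Hsim x z z' Hz Hz'.
  apply Rel_iff_run in Hz as (r1 & k1 & Hr1 & Hx1 & ->).
  apply Rel_iff_run in Hz' as (r2 & k2 & Hr2 & Hx2 & ->).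
  rewrite !(restrL_window_I_future Hml). apply window_eq_iff. intros t Ht.
  replace t with (Z.of_nat (Z.to_nat t)) by lia.
  apply (signals_agree_of_sim Hsim); [lia | auto | auto | congruence].
Qed.

Lemma sim_inverse_of_async_complete :
  async_complete delta X0 b l m ->
  sim_rel b (Qhat delta X0 b l m) (Qm delta X0) (fun s x => Rel x s).
Proof.
  intros HAC. split; [|split].
  - intros s x Hs. split; [now exists x | exact I].
  - intros s (x & Hx & Hs). now exists x.
  - intros s x u y s' Hs Hd. cbn in *.
    apply deltahat_iff in Hd as (Hstep & x1 & x2 & H1 & H2 & Hd).
    apply Rel_iff_run in H1 as (r1 & k1 & Hr1 & <- & ->).
    apply Rel_iff_run in H2 as (r2 & k2 & Hr2 & <- & ->).
    set (r := splice_run r1 k1 u y r2 k2).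
    apply (window_step_splice Hml) in Hstep as [Hcur Hnext].
    rewrite <- window_I_splice_run in Hcur, Hnext. fold r in Hcur, Hnext.
    assert (Hinit : Rel x (restrL (window (signal r) (Z.of_nat k1) (M - L) M) 0 (L - 1)))
      by now rewrite (restrL_window_init Hml), Hcur.
    assert (Hpi := Pi_window_run k1 (is_run_splice_run Hr1 Hr2 Hd)). fold r in Hpi.
    assert (Hzeta := HAC x _ Hpi Hinit).
    apply E_iff_run in Hzeta as (r3 & k3 & Hr3 & <- & Hzeta).
    exists (run_in r3 k3), (run_out r3 k3), (run_st r3 (S k3)). split; [|split].
    + exact (run_step k3 Hr3).
    + rewrite <- Hnext, <- (restrL_window_succ Hml), Hzeta, (restrL_window_succ Hml).
      rewrite <- window_I_succ.
      exact (Rel_window_run (S k3) Hr3).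
    + apply window_eq_iff with (t := 0) in Hzeta; [|unfold Ilo; lia].
      unfold r in Hzeta. rewrite !Z.add_0_r, signal_splice_run, splice_at, signal_of_nat in Hzeta.
      congruence.
Qed.

Lemma async_complete_of_sim_inverse :
  sim_rel b (Qhat delta X0 b l m) (Qm delta X0) (fun s x => Rel x s) ->
  async_complete delta X0 b l m.
Proof.
  intros (_ & _ & Hsim) x zeta Hpi Hinit.
  destruct (window_of_Pi Hpi) as (r0 & p0 & Hr0 & Hp0 & ->).
  rewrite (restrL_window_init Hml) in Hinit.
  apply Rel_window_nonneg in Hinit as Hp0'; [|exact Hp0].
  destruct (Z_of_nat_complete p0 Hp0') as [k0 ->].
  destruct (Hsim _ _ _ _ _ Hinit (deltahat_consecutive k0 Hr0 eq_refl eq_refl))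
    as (u & y & x' & Hd & HR' & Hio).
  apply Rel_iff_run in Hinit as (r1 & k1 & Hr1 & <- & Hs).
  apply Rel_iff_run in HR' as (r2 & k2 & Hr2 & <- & Hs').
  set (r := splice_run r1 k1 u y r2 k2).
  assert (Hstep := window_step_consecutive Hml (signal r0) (Z.of_nat k0)).
  rewrite <- window_I_succ, Hs, Hs', signal_of_nat, Hio in Hstep.
  apply (window_step_splice Hml) in Hstep as [Hcur Hnext].
  rewrite <- window_I_splice_run in Hcur, Hnext. fold r in Hcur, Hnext.
  apply E_iff_run. exists r, k1.
  split; [now apply is_run_splice_run|]. split; [apply splice_run_st_at|].
  apply (window_eq_of_subwindows Hml).
  - now rewrite Hs, Hcur.
  - now rewrite window_I_succ in Hs'; rewrite Hs', Hnext.
  - unfold r. now rewrite signal_splice_run, splice_at, signal_of_nat, Hio.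
Qed.

End Abstraction.

Theorem theorem3 (X U Y : Type) (delta : X -> U -> Y -> X -> Prop) (X0 : X -> Prop)
  (b : bool) (l m : nat) :
  live_reachable delta X0 ->
  (forall x u y x', delta x u y x' <-> (Fdelta delta x u x' /\ Hdelta delta x y)) ->
  W_finite U Y b ->
  (m <= l)%nat ->
  (sim_rel true (Qm delta X0) (Qhat delta X0 b l m) (Rel delta X0 b l m)
     <-> future_unique delta X0 b l m) /\
  (sim_rel b (Qhat delta X0 b l m) (Qm delta X0)
     (fun s x => Rel delta X0 b l m x s)
     <-> async_complete delta X0 b l m).
Proof.
  intros Hlr _ _ Hml. split; split.
  - apply future_unique_of_sim; exact Hml.
  - apply sim_of_future_unique; assumption.
  - apply async_complete_of_sim_inverse; exact Hml.
  - apply sim_inverse_of_async_complete; exact Hml.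
Qed.
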